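(* If a group $G$ has a normal subgroup $N$ that is a free group and $G/N$ is amenable, then $G$ is residually amenable.
   Context: Groups are discrete. A group is residually amenable if every non-trivial element has non-trivial image under some surjective homomorphism onto an amenable group. *)

From Stdlib Require Import Reals List.
Import ListNotations.
Open Scope R_scope.

Record group := Group {
  carrier :> Type;
  mul : carrier -> carrier -> carrier;
  one : carrier;
  inv : carrier -> carrier;
  mulA : forall x y z, mul x (mul y z) = mul (mul x y) z;
  mul1g : forall x, mul one x = x;
  mulg1 : forall x, mul x one = x;
  mulVg : forall x, mul (inv x) x = one;
  mulgV : forall x, mul x (inv x) = one
}.

Arguments mul {g}.
Arguments one {g}.
Arguments inv {g}.

Definition is_hom (G H : group) (f : G -> H) : Prop :=
  forall x y : G, f (mul x y) = mul (f x) (f y).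

Definition surjective {A B : Type} (f : A -> B) : Prop :=
  forall y, exists x, f x = y.

Definition is_subgroup (G : group) (N : G -> Prop) : Prop :=
  N one /\ (forall x y, N x -> N y -> N (mul x y)) /\ (forall x, N x -> N (inv x)).

Definition is_normal (G : group) (N : G -> Prop) : Prop :=
  is_subgroup G N /\ (forall g n : G, N n -> N (mul (mul g n) (inv g))).

(* Words in letters of G: (s, true) stands for s, (s, false) for s^-1. *)
Definition letter_val {G : group} (l : G * bool) : G :=
  if snd l then fst l else inv (fst l).

Fixpoint word_val {G : group} (w : list (G * bool)) : G :=
  match w with
  | [] => one
  | l :: w' => mul (letter_val l) (word_val w')
  end.

Fixpoint reduced {G : group} (w : list (G * bool)) : Prop :=
  match w with
  | [] => True
  | l :: w' =>
      match w' with
      | [] => True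
      | l' :: _ => ~ (fst l = fst l' /\ snd l <> snd l') /\ reduced w'
      end
  end.

Definition word_over {G : group} (S : G -> Prop) (w : list (G * bool)) : Prop :=
  Forall (fun l => S (fst l)) w.

Definition free_subgroup (G : group) (N : G -> Prop) : Prop :=
  is_subgroup G N /\
  exists S : G -> Prop,
    (forall s, S s -> N s) /\
    (forall n, N n -> exists w, word_over S w /\ word_val w = n) /\
    (forall w, word_over S w -> reduced w -> w <> [] -> word_val w <> one).

Definition amenable (G : group) : Prop :=
  exists m : (G -> Prop) -> R,
    (forall A, 0 <= m A) /\
    m (fun _ => True) = 1 /\
    (forall A B : G -> Prop, (forall x, A x -> B x -> False) ->
       m (fun x => A x \/ B x) = m A + m B) /\
    (forall (g : G) (A : G -> Prop), m (fun x => A (mul (inv g) x)) = m A).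

Definition residually_amenable (G : group) : Prop :=
  forall g : G, g <> one ->
    exists (Q : group) (f : G -> Q),
      is_hom G Q f /\ surjective f /\ amenable Q /\ f g <> one.

(* "G/N is amenable", expressed through a quotient map: there is a surjective
   homomorphism onto an amenable group whose kernel is exactly N. *)
Definition amenable_quotient (G : group) (N : G -> Prop) : Prop :=
  exists (Q : group) (f : G -> Q),
    is_hom G Q f /\ surjective f /\ (forall x, f x = one <-> N x) /\ amenable Q.

From Pilot Require Import Defs.
From Stdlib Require Import Reals FunctionalExtensionality PropExtensionality.
From mathcomp Require Import all_boot all_order all_algebra all_fingroup.
From mathcomp Require Import boolp.
From mathcomp Require classical_sets filter.
From mathcomp Require Import Rstruct.
From mathcomp Require Import ring lra zify.
Set Implicit Arguments. Unset Strict Implicit. Unset Printing Implicit Defensive.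

(* An element g outside the free normal subgroup N survives in the amenable
   quotient G / N.  A nontrivial g in N is a reduced word in a free basis, and
   sending the basis to suitable permutations of a finite set gives a morphism
   psi from N to a finite group gT with psi g <> 1.  The intersection K of the
   kernels of all morphisms N -> gT is normal in G and misses g, and G / K is
   amenable: N / K is locally finite, and integrating, against the invariant
   mean of G / N, ultralimits of uniform measures on the finite subgroups of
   N / K gives an invariant mean on G / K. *)

Local Notation "x ⋅ y" := (Defs.mul x y) (at level 40, left associativity).
Local Notation "x ⁻¹" := (Defs.inv x) (at level 3, format "x ⁻¹").
Local Notation "'𝟙'" := Defs.one.

Section GroupBasics.
Variable G : Defs.group.
Implicit Types x y z : G.

Lemma gmulA x y z : x ⋅ (y ⋅ z) = x ⋅ y ⋅ z. Proof. exact: Defs.mulA. Qed.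
Lemma gmul1l x : 𝟙 ⋅ x = x. Proof. exact: Defs.mul1g. Qed.
Lemma gmul1r x : x ⋅ 𝟙 = x. Proof. exact: Defs.mulg1. Qed.
Lemma gmulVl x : x⁻¹ ⋅ x = 𝟙. Proof. exact: Defs.mulVg. Qed.
Lemma gmulVr x : x ⋅ x⁻¹ = 𝟙. Proof. exact: Defs.mulgV. Qed.
Lemma gmulKl x y : x⁻¹ ⋅ (x ⋅ y) = y. Proof. by rewrite gmulA gmulVl gmul1l. Qed.
Lemma gmulKVl x y : x ⋅ (x⁻¹ ⋅ y) = y. Proof. by rewrite gmulA gmulVr gmul1l. Qed.
Lemma gmulKr x y : y ⋅ x ⋅ x⁻¹ = y. Proof. by rewrite -gmulA gmulVr gmul1r. Qed.
Lemma gcancl x y z : x ⋅ y = x ⋅ z -> y = z.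
Proof. by move=> h; rewrite -(gmulKl x y) h gmulKl. Qed.
Lemma ginv_uniq x y : x ⋅ y = 𝟙 -> y = x⁻¹.
Proof. by move=> h; apply: (@gcancl x); rewrite h gmulVr. Qed.
Lemma ginvK x : x⁻¹⁻¹ = x.
Proof. by symmetry; apply: ginv_uniq; rewrite gmulVl. Qed.
Lemma ginvM x y : (x ⋅ y)⁻¹ = y⁻¹ ⋅ x⁻¹.
Proof. by symmetry; apply: ginv_uniq; rewrite -gmulA (gmulA y) gmulVr gmul1l gmulVr. Qed.
Lemma ginv1 : (𝟙 : G)⁻¹ = 𝟙.
Proof. by symmetry; apply: ginv_uniq; rewrite gmul1l. Qed.
End GroupBasics.

Section Homomorphisms.
Variables (G Q : Defs.group) (f : G -> Q).
Hypothesis hf : is_hom G Q f.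

Lemma hom1 : f 𝟙 = 𝟙.
Proof. by apply: (@gcancl _ (f 𝟙)); rewrite -hf !gmul1r. Qed.
Lemma homV x : f x⁻¹ = (f x)⁻¹.
Proof. by apply: ginv_uniq; rewrite -hf gmulVr hom1. Qed.
End Homomorphisms.

Section NormalSubgroup.
Variables (G : Defs.group) (N : G -> Prop).
Hypothesis nN : is_normal G N.

Lemma normal1 : N 𝟙. Proof. by case: nN => [[]]. Qed.
Lemma normalM x y : N x -> N y -> N (x ⋅ y). Proof. by case: nN => [[_ []]]; auto. Qed.
Lemma normalV x : N x -> N x⁻¹. Proof. by case: nN => [[_ []]]; auto. Qed.
Lemma normalJ g n : N n -> N (g ⋅ n ⋅ g⁻¹). Proof. by case: nN => _; auto. Qed.

Lemma normal_sym x y : N (x⁻¹ ⋅ y) -> N (y⁻¹ ⋅ x).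
Proof. by move/normalV; rewrite ginvM ginvK. Qed.
End NormalSubgroup.

Section QuotientGroup.
Variables (G : Defs.group) (K : G -> Prop).
Hypothesis nK : is_normal G K.

Definition coset (x : G) : G -> Prop := fun y => K (x⁻¹ ⋅ y).
Definition coset_type := {P : G -> Prop | exists x, P = coset x}.

Lemma coset_eq x y : coset x = coset y <-> K (x⁻¹ ⋅ y).
Proof.
split=> [e|kxy].
  by have : coset x y by rewrite e /coset gmulVl; exact: normal1 nK.
apply: functional_extensionality => z; apply: propositional_extensionality.
rewrite /coset; split=> kz.
  by have := normalM nK (normalV nK kxy) kz; rewrite ginvM ginvK gmulA gmulKr.
by have := normalM nK kxy kz; rewrite gmulA gmulKr.
Qed.

Definition cosetP (x : G) : coset_type := exist _ (coset x) (ex_intro _ x erefl).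

Definition coset_repr (P : coset_type) : G :=
  proj1_sig (cid (proj2_sig P)).

Lemma coset_reprK P : cosetP (coset_repr P) = P.
Proof.
rewrite /coset_repr; case: cid => x ex.
case: P ex => P pP /= ex; subst P.
by congr exist; apply: proof_irrelevance.
Qed.

Lemma cosetP_eq x y : cosetP x = cosetP y <-> K (x⁻¹ ⋅ y).
Proof.
rewrite -coset_eq; split => [/(congr1 (@proj1_sig _ _)) //|e].
by rewrite /cosetP; move: (ex_intro _ x _) (ex_intro _ y _); rewrite e => p q;
  congr exist; apply: proof_irrelevance.
Qed.

Lemma coset_ind (P : coset_type -> Prop) : (forall x, P (cosetP x)) -> forall q, P q.
Proof. by move=> h q; rewrite -(coset_reprK q). Qed.

Definition coset_mul (P Q : coset_type) := cosetP (coset_repr P ⋅ coset_repr Q).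
Definition coset_inv (P : coset_type) := cosetP (coset_repr P)⁻¹.

Lemma coset_mulE x y : coset_mul (cosetP x) (cosetP y) = cosetP (x ⋅ y).
Proof.
apply/cosetP_eq; rewrite /coset_mul.
set a := coset_repr (cosetP x); set b := coset_repr (cosetP y).
have ha : K (a⁻¹ ⋅ x) by apply: (normal_sym nK); apply/cosetP_eq; rewrite /a coset_reprK.
have hb : K (b⁻¹ ⋅ y) by apply: (normal_sym nK); apply/cosetP_eq; rewrite /b coset_reprK.
have -> : (a ⋅ b)⁻¹ ⋅ (x ⋅ y) = b⁻¹ ⋅ (a⁻¹ ⋅ x) ⋅ b⁻¹⁻¹ ⋅ (b⁻¹ ⋅ y).
  by rewrite ginvK ginvM -(gmulA _ b) gmulKVl !gmulA.
exact: (normalM nK (normalJ nK _ ha) hb).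
Qed.

Lemma coset_invE x : coset_inv (cosetP x) = cosetP x⁻¹.
Proof.
apply/cosetP_eq; rewrite /coset_inv ginvK.
have ha : K (x⁻¹ ⋅ coset_repr (cosetP x)) by apply/cosetP_eq; rewrite coset_reprK.
by have := normalJ nK x ha; rewrite gmulKVl.
Qed.

Definition quotient_group : Defs.group.
refine (@Defs.Group coset_type coset_mul (cosetP 𝟙) coset_inv _ _ _ _ _).
- move=> x y z; elim/coset_ind: x; elim/coset_ind: y; elim/coset_ind: z => z y x.
  by rewrite !coset_mulE gmulA.
- by elim/coset_ind => x; rewrite coset_mulE gmul1l.
- by elim/coset_ind => x; rewrite coset_mulE gmul1r.
- by elim/coset_ind => x; rewrite coset_invE coset_mulE gmulVl.
- by elim/coset_ind => x; rewrite coset_invE coset_mulE gmulVr.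
Defined.

Definition quotient_map (x : G) : quotient_group := cosetP x.

Lemma quotient_map_hom : is_hom G quotient_group quotient_map.
Proof. by move=> x y; rewrite /quotient_map /= coset_mulE. Qed.
Lemma quotient_map_surj : surjective quotient_map.
Proof. by move=> P; exists (coset_repr P); rewrite /quotient_map coset_reprK. Qed.
Lemma quotient_map_eq x y : quotient_map x = quotient_map y <-> K (x⁻¹ ⋅ y).
Proof. exact: cosetP_eq. Qed.
Lemma quotient_map_eq1 x : quotient_map x = 𝟙 <-> K x.
Proof.
rewrite [𝟙]/= (quotient_map_eq x 𝟙) gmul1r.
by split=> /(normalV nK); rewrite ?ginvK.
Qed.
End QuotientGroup.

Definition morph_on (G : Defs.group) (N : G -> Prop) (gT : finGroupType) (psi : G -> gT) :=
  forall x y, N x -> N y -> psi (x ⋅ y) = (psi x * psi y)%g.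

Lemma perm_extend (T : finType) (D : {set T}) (f : T -> T) :
  {in D &, injective f} -> exists p : {perm T}, {in D, p =1 f}.
Proof.
move=> finj.
set eA := enum (~: D); set eB := enum (~: (f @: D)).
have size_eAB : size eA = size eB.
  rewrite /eA /eB -!cardE.
  by have := cardsC (f @: D); rewrite card_in_imset // -(cardsC D) => /addnI.
pose g x := if x \in D then f x else nth x eB (index x eA).
have outside_img z : z \notin D -> nth z eB (index z eA) \in ~: (f @: D).
  move=> hz; rewrite -mem_enum -/eB mem_nth // -size_eAB index_mem.
  by rewrite /eA mem_enum in_setC.
have ginj : injective g.
  move=> x y; rewrite /g; case: ifP => hx; case: ifP => hy.
  - exact: finj.
  - by move=> e; have := outside_img y (negbT hy); rewrite -e in_setC imset_f.
  - by move=> e; have := outside_img x (negbT hx); rewrite e in_setC imset_f.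
  - move=> e.
    have hxA : x \in eA by rewrite /eA mem_enum in_setC hx.
    have hyA : y \in eA by rewrite /eA mem_enum in_setC hy.
    have ix : (index x eA < size eB)%N by rewrite -size_eAB index_mem.
    have iy : (index y eA < size eB)%N by rewrite -size_eAB index_mem.
    have ei : index x eA = index y eA.
      apply/eqP; rewrite -(nth_uniq x ix iy) ?enum_uniq //.
      by rewrite e (set_nth_default y x iy).
    by rewrite -(nth_index x hxA) ei (set_nth_default y x) ?nth_index // index_mem.
by exists (perm ginj) => x hx; rewrite permE /g hx.
Qed.

Section Words.
Variable G : Defs.group.
Implicit Types w : list (G * bool).

Lemma reduced_behead l w : reduced (l :: w) -> reduced w.
Proof. by case: w => //= l' w [_ h]. Qed.

Lemma word_val_cat w1 w2 : word_val (w1 ++ w2) = word_val w1 ⋅ word_val w2.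
Proof. by elim: w1 => [|l w IH] /=; rewrite ?gmul1l // IH gmulA. Qed.

Definition letter_inv (l : G * bool) := (l.1, ~~ l.2).
Definition word_inv w := List.rev (List.map letter_inv w).

Lemma word_val_inv w : word_val (word_inv w) = (word_val w)⁻¹.
Proof.
elim: w => [|[s b] w IH] /=; first by rewrite ginv1.
rewrite /word_inv /= word_val_cat -/(word_inv w) IH /= gmul1r ginvM.
by case: b; rewrite /letter_val /= ?ginvK.
Qed.

Lemma In_word_inv l w : List.In l (word_inv w) -> exists2 l', List.In l' w & l.1 = l'.1.
Proof.
rewrite /word_inv -List.in_rev List.in_map_iff => -[l' [<- hl']].
by exists l'.
Qed.

Variables (gT : finGroupType) (sigma : G -> gT).

Definition letter_eval (l : G * bool) : gT := if l.2 then sigma l.1 else (sigma l.1)^-1%g.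

Fixpoint word_eval w : gT :=
  if w is l :: w' then (letter_eval l * word_eval w')%g else 1%g.

Lemma word_eval_cat w1 w2 : word_eval (w1 ++ w2) = (word_eval w1 * word_eval w2)%g.
Proof. by elim: w1 => [|l w IH] /=; rewrite ?mul1g // IH mulgA. Qed.

Lemma word_eval_inv w : word_eval (word_inv w) = (word_eval w)^-1%g.
Proof.
elim: w => [|[s b] w IH] /=; first by rewrite invg1.
rewrite /word_inv /= word_eval_cat -/(word_inv w) IH /= mulg1 invMg.
by case: b; rewrite /letter_eval /= ?invgK.
Qed.

Lemma reduce_word w : exists r, [/\ reduced r, forall l, List.In l r -> List.In l w,
  word_val r = word_val w & word_eval r = word_eval w].
Proof.
elim: w => [|l w [r [hr hin hv he]]]; first by exists [::].
case: r hr hin hv he => [|l' r] hr hin hv he.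
  exists [:: l]; split => //=; last by rewrite -he.
  - by move=> x [->|[]]; left.
  - by rewrite -hv.
have [[s_eq b_ne]|not_cancel] := pselect (l.1 = l'.1 /\ l.2 <> l'.2).
  exists r; split.
  - exact: reduced_behead hr.
  - by move=> x hx; right; apply: hin; right.
  - case: l l' s_eq b_ne {hr hin he} hv => [s b] [_ b'] /= <- b_ne <- /=.
    by rewrite gmulA; case: b b' b_ne => [] [] //= _; rewrite ?gmulVr ?gmulVl gmul1l.
  - case: l l' s_eq b_ne {hr hin hv} he => [s b] [_ b'] /= <- b_ne <- /=.
    by rewrite mulgA; case: b b' b_ne => [] [] //= _; rewrite /letter_eval /= ?mulgV ?mulVg mul1g.
exists [:: l, l' & r]; split => //=; last by rewrite -he.
- by move=> x [->|hx]; [left|right; apply: hin].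
- by rewrite -hv.
Qed.

Variable S : G -> Prop.
Hypothesis S_free : forall w, word_over S w -> reduced w -> w <> [::] -> word_val w <> 𝟙.

Lemma word_overP w : word_over S w <-> (forall l, List.In l w -> S l.1).
Proof. exact: List.Forall_forall. Qed.

Lemma word_eval_congr w1 w2 : word_over S w1 -> word_over S w2 ->
  word_val w1 = word_val w2 -> word_eval w1 = word_eval w2.
Proof.
move=> /word_overP h1 /word_overP h2 e.
have [r [hr hin hv he]] := reduce_word (w1 ++ word_inv w2).
have r_over : word_over S r.
  apply/word_overP => l /hin /List.in_app_iff [/h1 //|/In_word_inv [l' /h2 ? ->//]].
have r_nil : r = [::].
  apply: contrapT => r_ne; apply: (S_free r_over hr r_ne).
  by rewrite hv word_val_cat word_val_inv e gmulVr.
move: he; rewrite r_nil word_eval_cat word_eval_inv /= => /esym/eqP.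
by rewrite mulg_eq1 invgK => /eqP.
Qed.

Variable N : G -> Prop.
Hypothesis S_gen : forall n, N n -> exists w, word_over S w /\ word_val w = n.

(* Off N the lift takes the junk value 1. *)
Definition free_lift (n : G) : gT :=
  if pselect (exists w, word_over S w /\ word_val w = n) is left h
  then word_eval (proj1_sig (cid h)) else 1%g.

Lemma free_lift_word w : word_over S w -> free_lift (word_val w) = word_eval w.
Proof.
move=> hw; rewrite /free_lift; case: pselect => [h|[]]; last by exists w.
by case: cid => w' [hw' e] /=; apply: word_eval_congr.
Qed.

Lemma free_lift_morph : morph_on N free_lift.
Proof.
move=> x y /S_gen [wx [hx <-]] /S_gen [wy [hy <-]].
rewrite -word_val_cat !free_lift_word ?word_eval_cat //.
by apply/List.Forall_app.
Qed.
End Words.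

(* A reduced word l_0 ... l_(k-1) is realised as the path 0 -> 1 -> ... -> k of
   'I_k.+1: the letter (s, true) moves j to j+1 when l_j = s, and (s, false)
   moves j+1 back to j when l_j = s^-1.  Reducedness makes these partial maps
   injective, and permutations extending them evaluate the word to a
   permutation moving 0 to k. *)
Section ReducedWordPermutation.
Local Open Scope nat_scope.
Variables (G : Defs.group) (r : list (G * bool)).
Hypothesis hr : reduced r.
Local Notation k := (size r).
Let d0 : G * bool := (𝟙, true).

Lemma reduced_nth (w : list (G * bool)) j : reduced w -> j.+1 < size w ->
  ~ ((nth d0 w j).1 = (nth d0 w j.+1).1 /\ (nth d0 w j).2 <> (nth d0 w j.+1).2).
Proof.
elim: w j => [|l w IH] //= [|j] hw hj.
  by case: w hw hj {IH} => [|l' w] //= [].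
by apply: IH => //; apply: reduced_behead hw.
Qed.

Definition letter_at (s : G) (b : bool) (j : nat) := j < k /\ nth d0 r j = (s, b).

Lemma letter_at_adj s b j : letter_at s b j -> letter_at s (~~ b) j.+1 -> False.
Proof.
move=> [_ ej] [hj1 ej1]; apply: (reduced_nth hr hj1).
by rewrite ej ej1; case: b {ej ej1}.
Qed.

Definition letter_step (s : G) (x : nat) : nat :=
  if `[< letter_at s true x >] then x.+1
  else if `[< 0 < x /\ letter_at s false x.-1 >] then x.-1 else x.

Definition letter_dom (s : G) : {set 'I_k.+1} :=
  [set x : 'I_k.+1 | `[< letter_at s true x >] || `[< 0 < x /\ letter_at s false x.-1 >]].

Lemma letter_dom_cases s (x : 'I_k.+1) : x \in letter_dom s ->
  letter_at s true x /\ letter_step s x = x.+1 \/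
  [/\ ~ letter_at s true x, 0 < x, letter_at s false x.-1 & letter_step s x = x.-1].
Proof.
rewrite /letter_step inE.
case: asboolP => [pos _|npos /=]; first by left.
by case: asboolP => // -[x0 neg] _; right.
Qed.

Lemma letter_step_bound s (x : 'I_k.+1) : x \in letter_dom s -> letter_step s x < k.+1.
Proof. by case/letter_dom_cases => [[[xk _] ->]|[_ _ _ ->]] //; apply: leq_ltn_trans (leq_pred _) _. Qed.

Definition letter_pfun (s : G) (x : 'I_k.+1) : 'I_k.+1 := inord (letter_step s x).

Lemma letter_pfun_inj s : {in letter_dom s &, injective (letter_pfun s)}.
Proof.
move=> x y hx hy /(congr1 val); rewrite /= !inordK ?letter_step_bound // => e.
apply: val_inj => /=.
case: (letter_dom_cases hx) => [[px ex]|[_ x0 nx ex]];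
case: (letter_dom_cases hy) => [[py ey]|[_ y0 ny ey]]; rewrite ex ey in e.
- exact: succn_inj.
- by case: (letter_at_adj px); rewrite e.
- by case: (letter_at_adj py); rewrite -e.
- by rewrite -(prednK x0) -(prednK y0) e.
Qed.

Definition letter_perm (s : G) : {perm 'I_k.+1} :=
  proj1_sig (cid (perm_extend (@letter_pfun_inj s))).

Lemma letter_permE s : {in letter_dom s, letter_perm s =1 letter_pfun s}.
Proof. by rewrite /letter_perm; case: cid. Qed.

Lemma letter_perm_step j : j < k ->
  letter_eval letter_perm (nth d0 r j) (inord j) = inord j.+1.
Proof.
move=> hj; have hj1 : j < k.+1 by apply: ltnW.
case e: (nth d0 r j) => [s [|]]; rewrite /letter_eval /=.
- have pos : letter_at s true j by [].
  have hD : (inord j : 'I_k.+1) \in letter_dom s.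
    by rewrite inE inordK //; apply/orP; left; apply/asboolP.
  by rewrite letter_permE // /letter_pfun /letter_step inordK //; case: asboolP.
- have neg : letter_at s false j by [].
  have hD : (inord j.+1 : 'I_k.+1) \in letter_dom s.
    by rewrite inE inordK //; apply/orP; right; apply/asboolP.
  apply: (canLR (permK _)); rewrite letter_permE // /letter_pfun /letter_step inordK //.
  case: asboolP => [pos|_]; first by case: (letter_at_adj neg pos).
  by case: asboolP => // -[].
Qed.

Lemma word_eval_letter_perm_suffix d : d <= k ->
  word_eval letter_perm (drop (k - d) r) (inord (k - d)) = inord k.
Proof.
elim: d => [|d IH] hd; first by rewrite subn0 drop_oversize //= perm1.
have hj : k - d.+1 < k by lia.
rewrite (drop_nth d0 hj) /= permM letter_perm_step //.
have -> : (k - d.+1).+1 = k - d by lia.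
by apply: IH; lia.
Qed.

Lemma word_eval_letter_perm_ne1 : r <> [::] -> word_eval letter_perm r <> 1%g.
Proof.
move=> r_ne e; have := word_eval_letter_perm_suffix (leqnn k).
rewrite subnn drop0 e perm1 => /(congr1 val) /=.
by rewrite !inordK //; move: r_ne; case: (r).
Qed.
End ReducedWordPermutation.

Import Order.TTheory GRing.Theory Num.Theory.

Record ultrafilter (I : Type) := Ultrafilter {
  uf :> (I -> Prop) -> Prop;
  ufT : uf (fun _ => True);
  uf0 : ~ uf (fun _ => False);
  ufI : forall A B, uf A -> uf B -> uf (fun i => A i /\ B i);
  ufS : forall A B : I -> Prop, (forall i, A i -> B i) -> uf A -> uf B;
  uf_or_compl : forall A, uf A \/ uf (fun i => ~ A i)
}.

Lemma ultrafilter_cofinal (I : Type) (le : I -> I -> Prop) (i0 : I) :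
  (forall a b c, le a b -> le b c -> le a c) ->
  (forall a b, exists c, le a c /\ le b c) ->
  exists U : ultrafilter I, forall a, U (le a).
Proof.
move=> le_trans le_dir.
pose F := filter.filter_from (@classical_sets.setT I) (fun a => le a : classical_sets.set I).
have FF : filter.Filter F.
  apply: filter.filter_fromT_filter; first by exists i0.
  move=> a b; have [c [ac bc]] := le_dir a b.
  by exists c => j /= cj; split; apply: le_trans cj.
have PF : filter.ProperFilter F.
  apply: filter.filter_from_proper => a _.
  by have [c [ac _]] := le_dir a a; exists c.
have [U [UU FU]] := filter.ultraFilterLemma PF.
have [[UP UF] _] := UU.
unshelve eexists (@Ultrafilter I U _ _ _ _ _).
- exact: filter.filterT.
- exact: (filter.filter_not_empty U).
- by move=> A B; apply: filter.filterI.
- by move=> A B hAB; apply: filter.filterS => x; apply: hAB.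
- by move=> A; exact: (filter.in_ultra_setVsetC A UU).
- by move=> a; apply: FU; exists a.
Qed.

Section UltraLimit.
Local Open Scope ring_scope.
Variables (I : Type) (U : ultrafilter I).
Implicit Types a b : I -> R.

Definition is_ulim a (L : R) := forall e : R, 0 < e -> U (fun i => `|a i - L| < e).

Lemma is_ulim_uniq a L L' : is_ulim a L -> is_ulim a L' -> L = L'.
Proof.
move=> h h'; apply/eqP; apply: contrapT => /negP hne.
have hp : 0 < `|L - L'| / 2 by rewrite divr_gt0 // normr_gt0 subr_eq0.
apply: (uf0 (ufS _ (ufI (h _ hp) (h' _ hp)))) => i [h1 h2].
have : `|L - L'| <= `|a i - L'| + `|a i - L|.
  have -> : L - L' = (a i - L') - (a i - L) by ring.
  exact: ler_normB.
lra.
Qed.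

(* Junk value 0 when there is no ultralimit. *)
Definition ulim a : R :=
  if pselect (exists L, is_ulim a L) is left h then proj1_sig (cid h) else 0.

Lemma ulim_eq a L : is_ulim a L -> ulim a = L.
Proof.
move=> h; rewrite /ulim; case: pselect => [h'|[]]; last by exists L.
by case: cid => L' hL' /=; apply: is_ulim_uniq hL' h.
Qed.

Lemma ulim_exists a lo hi : (forall i, lo <= a i <= hi) -> exists L, is_ulim a L.
Proof.
move=> hb; pose E := fun r : R => U (fun i => r <= a i).
have bE : bound E.
  exists hi => r hr; apply/RleP; apply: contrapT => /negP; rewrite -ltNge => hr'.
  by apply: (uf0 (ufS _ hr)) => i hi'; have := hb i; lra.
have eE : exists x, E x by exists lo; apply: ufS (ufT U) => i _; case/andP: (hb i).
have [L [ub lub]] := completeness E bE eE.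
exists L => e he.
have above : U (fun i => L - e < a i).
  apply: contrapT => hn.
  suff : Rle L (L - e) by rewrite RminusE => /RleP; lra.
  apply: lub => r hr; apply/RleP; apply: contrapT => /negP; rewrite -ltNge RminusE => hlt.
  by apply: hn; apply: ufS hr => i hri; lra.
have below : U (fun i => a i < L + e).
  case: (uf_or_compl U (fun i => a i < L + e)) => // hn.
  have : E (L + e) by apply: ufS hn => i /negP; rewrite -leNgt.
  by move/ub/RleP; lra.
apply: ufS (ufI above below) => i [h3 h4].
by rewrite ltr_norml; apply/andP; split; lra.
Qed.

Lemma ulim_spec a lo hi : (forall i, lo <= a i <= hi) -> is_ulim a (ulim a).
Proof. by move=> hb; have [L hL] := ulim_exists hb; rewrite (ulim_eq hL). Qed.

Lemma ulim_lb a lo hi L : (forall i, lo <= a i <= hi) ->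
  (forall e, 0 < e -> U (fun i => L - e <= a i)) -> L <= ulim a.
Proof.
move=> hb h; rewrite leNgt; apply/negP => hlt.
have he : 0 < (L - ulim a) / 2 by rewrite divr_gt0 // subr_gt0.
apply: (uf0 (ufS _ (ufI (ulim_spec hb he) (h _ he)))) => i [h1 h2].
by move: h1; rewrite ltr_norml => /andP[h3 h4]; lra.
Qed.

Lemma ulim_bounds a lo hi : (forall i, lo <= a i <= hi) -> lo <= ulim a <= hi.
Proof.
move=> hb; apply/andP; split.
  by apply: (ulim_lb hb) => e he; apply: ufS (ufT U) => i _; have := hb i; lra.
rewrite leNgt; apply/negP => hlt.
have he : 0 < ulim a - hi by lra.
apply: (uf0 (ufS _ (ulim_spec hb he))) => i; rewrite ltr_norml => /andP[h1 h2].
by have := hb i; lra.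
Qed.

Lemma ulimD a b la ha lb hb : (forall i, la <= a i <= ha) -> (forall i, lb <= b i <= hb) ->
  ulim (fun i => a i + b i) = ulim a + ulim b.
Proof.
move=> ba bb; apply: ulim_eq => e he.
have he2 : 0 < e / 2 by apply: divr_gt0.
apply: ufS (ufI (ulim_spec ba he2) (ulim_spec bb he2)) => i [h1 h2].
have : `|a i + b i - (ulim a + ulim b)| <= `|a i - ulim a| + `|b i - ulim b|.
  have -> : a i + b i - (ulim a + ulim b) = (a i - ulim a) + (b i - ulim b) by ring.
  exact: ler_normD.
lra.
Qed.

Lemma ulim_congr a b lo hi : (forall i, lo <= a i <= hi) ->
  U (fun i => a i = b i) -> ulim a = ulim b.
Proof.
move=> ba hU; apply/esym/ulim_eq => e he.
by apply: ufS (ufI (ulim_spec ba he) hU) => i [h1 <-].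
Qed.
End UltraLimit.

Definition invariant_mean (Q : Defs.group) (m : (Q -> Prop) -> R) : Prop :=
  [/\ forall A, (0 <= m A)%R, m (fun _ => True) = 1%R,
      forall A B : Q -> Prop, (forall x, A x -> B x -> False) ->
        m (fun x => A x \/ B x) = (m A + m B)%R
    & forall g A, m (fun x => A (g⁻¹ ⋅ x)) = m A].

Lemma amenableP (Q : Defs.group) :
  amenable Q <-> exists m : (Q -> Prop) -> R, invariant_mean m.
Proof.
split=> [[m [m0 [m1 [madd minv]]]]|[m [m0 m1 madd minv]]]; exists m.
  by split=> // A; apply/RleP.
by split=> // A; apply/RleP.
Qed.

Lemma fun_ext_iff (T : Type) (A B : T -> Prop) : (forall x, A x <-> B x) -> A = B.
Proof. by move=> h; apply: functional_extensionality => x; apply: propositional_extensionality. Qed.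

Section Integral.
Local Open Scope ring_scope.
Variables (Q : Defs.group) (m : (Q -> Prop) -> R).
Hypothesis hm : invariant_mean m.
Implicit Types (f g : Q -> R) (lo hi : R).

Lemma mean_ge0 A : 0 <= m A. Proof. by case: hm. Qed.
Lemma meanT : m (fun _ => True) = 1. Proof. by case: hm. Qed.
Lemma meanU A B : (forall x, A x -> B x -> False) -> m (fun x => A x \/ B x) = m A + m B.
Proof. by case: hm => _ _ madd _; apply: madd. Qed.

Lemma mean0 A : (forall x, ~ A x) -> m A = 0.
Proof.
move=> hA; have := @meanU A A (fun x _ => @hA x).
by rewrite (@fun_ext_iff _ (fun x => A x \/ A x) A) => [|x]; [lra|tauto].
Qed.

Section FiniteCells.
Variables (Y : finType) (cell : Q -> Y).

Lemma mean_cells_seq (s : seq Y) : uniq s ->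
  m (fun q => cell q \in s) = \sum_(y <- s) m (fun q => cell q = y).
Proof.
elim: s => [_|y s IH /andP[ys us]]; first by rewrite big_nil mean0.
rewrite big_cons -IH // -meanU => [|x /= ->]; last by rewrite (negbTE ys).
congr m; apply: fun_ext_iff => x; rewrite in_cons.
by split=> [/orP[/eqP|]|[->|->]]; rewrite ?eqxx ?orbT; auto.
Qed.

Lemma mean_cells (P : pred Y) :
  m (fun q => P (cell q)) = \sum_(y | P y) m (fun q => cell q = y).
Proof.
rewrite -big_filter -mean_cells_seq ?filter_uniq ?index_enum_uniq //.
by congr m; apply: fun_ext_iff => x; rewrite mem_filter mem_index_enum andbT.
Qed.

Lemma sum_mean_cells : \sum_(y : Y) m (fun q => cell q = y) = 1.
Proof. by rewrite -meanT -(mean_cells predT); congr m; apply: fun_ext_iff. Qed.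

Lemma sum_mean_cells_bounds (c : Y -> R) lo hi : (forall q, lo <= c (cell q) <= hi) ->
  lo <= \sum_(y : Y) c y * m (fun q => cell q = y) <= hi.
Proof.
move=> hc.
have cell_bound y : lo * m (fun q => cell q = y) <= c y * m (fun q => cell q = y) <=
                    hi * m (fun q => cell q = y).
  have [[q <-]|empty] := pselect (exists q, cell q = y).
    by have /andP[lo_c c_hi] := hc q; rewrite !ler_wpM2r ?mean_ge0.
  by rewrite mean0 ?mulr0 ?lexx // => q hq; apply: empty; exists q.
rewrite -[lo]mulr1 -[hi]mulr1 -sum_mean_cells !mulr_sumr.
by apply/andP; split; apply: ler_sum => y _; case/andP: (cell_bound y).
Qed.

Lemma sum_mean_cells_coarsen (Y' : finType) (rho : Y -> Y') (c : Y' -> R) :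
  \sum_(y' : Y') c y' * m (fun q => rho (cell q) = y') =
  \sum_(y : Y) c (rho y) * m (fun q => cell q = y).
Proof.
have e y' : m (fun q => rho (cell q) = y') = \sum_(y | rho y == y') m (fun q => cell q = y).
  by rewrite -(mean_cells (fun y => rho y == y')); congr m; apply: fun_ext_iff => x; split=> /eqP.
under eq_bigr => y' _ do rewrite e mulr_sumr.
rewrite (exchange_big_dep xpredT) //=; apply: eq_bigr => y _.
by rewrite (big_pred1 (rho y)) // => y'; rewrite eq_sym.
Qed.
End FiniteCells.

Definition level (n : nat) (t : R) : 'I_n.+1 := inord (Num.truncn (n%:R * t)).
Arguments level n t%_ring_scope.

Lemma levelP n t : (0 < n)%N -> 0 <= t <= 1 ->
  (level n t)%:R <= n%:R * t < (level n t).+1%:R.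
Proof.
move=> n0 /andP[t0 t1].
have nt0 : 0 <= n%:R * t by apply: mulr_ge0.
have trunc_le : (Num.truncn (n%:R * t) <= n)%N.
  have trunc_le_nt : (Num.truncn (n%:R * t))%:R <= n%:R * t :> R by rewrite truncn_le.
  rewrite -(ler_nat R); apply: le_trans trunc_le_nt _.
  by rewrite -[leRHS]mulr1 ler_wpM2l.
by rewrite /level inordK ?ltnS //; apply: truncn_itv.
Qed.

Lemma levelD n (a b : R) : (0 < n)%N -> 0 <= a -> 0 <= b -> a + b <= 1 ->
  level n (a + b) = (level n a + level n b)%N :> nat \/
  level n (a + b) = (level n a + level n b).+1%N :> nat.
Proof.
move=> n0 a0 b0 ab1.
have /andP[a1 a2] : (level n a)%:R <= n%:R * a < (level n a).+1%:R.
  by apply: levelP => //; apply/andP; split; lra.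
have /andP[b1 b2] : (level n b)%:R <= n%:R * b < (level n b).+1%:R.
  by apply: levelP => //; apply/andP; split; lra.
have /andP[s1 s2] : (level n (a + b))%:R <= n%:R * (a + b) < (level n (a + b)).+1%:R.
  by apply: levelP => //; apply/andP; split; lra.
rewrite mulrDr -!natr1 in s1 s2 a2 b2.
have lo : (level n a + level n b < (level n (a + b)).+1)%N.
  by rewrite -(ltr_nat R) -natr1 !natrD; lra.
have hi : (level n (a + b) < level n a + level n b + 2)%N.
  by rewrite -(ltr_nat R) !natrD; lra.
lia.
Qed.

Definition riemann_sum (n : nat) (f : Q -> R) : R :=
  \sum_(y : 'I_n.+1) (y%:R / n%:R) * m (fun q => level n (f q) = y).

Lemma riemann_sum_bounds n f lo hi : (0 < n)%N -> (forall q, 0 <= f q <= 1) ->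
  (forall q, lo <= f q <= hi) -> lo - n%:R^-1 <= riemann_sum n f <= hi.
Proof.
move=> n0 f01 fb; apply: sum_mean_cells_bounds => q.
have n0' : (0 : R) < n%:R by rewrite ltr0n.
have /andP[l1 l2] := levelP n0 (f01 q); have /andP[lo_f f_hi] := fb q.
have above : (level n (f q))%:R / n%:R <= f q by rewrite ler_pdivrMr // mulrC.
have below : f q - n%:R^-1 <= (level n (f q))%:R / n%:R.
  rewrite ler_pdivlMr // mulrBl mulVf ?gt_eqF // mulrC.
  by rewrite -natr1 in l2; lra.
by apply/andP; split; lra.
Qed.

Lemma riemann_sum_range n f : (forall q, 0 <= f q <= 1) -> -1 <= riemann_sum n.+1 f <= 1.
Proof.
move=> f01; have /andP[h1 h2] := riemann_sum_bounds (ltn0Sn n) f01 f01.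
have : n.+1%:R^-1 <= 1 :> R by rewrite invf_le1 ?ler1n ?ltr0n.
by move: h1; set x := _^-1 => h1 hx; apply/andP; split; lra.
Qed.

Lemma riemann_sum_transl n f (t : Q) : riemann_sum n (fun q => f (t⁻¹ ⋅ q)) = riemann_sum n f.
Proof.
apply: eq_bigr => y _; congr (_ * _).
by case: hm => _ _ _ minv; exact: (minv t (fun q => level n (f q) = y)).
Qed.

Lemma riemann_sumD n f g : (0 < n)%N -> (forall q, 0 <= f q) -> (forall q, 0 <= g q) ->
  (forall q, f q + g q <= 1) ->
  0 <= riemann_sum n (fun q => f q + g q) - riemann_sum n f - riemann_sum n g <= n%:R^-1.
Proof.
move=> n0 f0 g0 fg1.
pose cell q := (level n (f q), level n (g q), level n (f q + g q)).
have coarsen (rho : 'I_n.+1 * 'I_n.+1 * 'I_n.+1 -> 'I_n.+1) h :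
    (forall q, rho (cell q) = level n (h q)) -> riemann_sum n h =
    \sum_y ((rho y)%:R / n%:R) * m (fun q => cell q = y).
  move=> hrho; rewrite -(sum_mean_cells_coarsen cell rho (fun y => y%:R / n%:R)).
  by apply: eq_bigr => y _; congr (_ * m _); apply: functional_extensionality => q; rewrite hrho.
rewrite (coarsen (fun y => y.2) _ (fun q => erefl)) (coarsen (fun y => y.1.1) f (fun q => erefl)).
rewrite (coarsen (fun y => y.1.2) g (fun q => erefl)) -!sumrB.
under eq_bigr => y _ do rewrite -!mulrBl.
apply: sum_mean_cells_bounds => q /=.
have n0' : (0 : R) < n%:R by rewrite ltr0n.
set x := (level n (f q))%:R; set y := (level n (g q))%:R.
have [e|e] := levelD n0 (f0 q) (g0 q) (fg1 q); rewrite e.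
- rewrite natrD -/x -/y (_ : x + y - x - y = 0); last by ring.
  by rewrite mul0r lexx invr_ge0 ltW.
- rewrite -natr1 natrD -/x -/y (_ : x + y + 1 - x - y = 1); last by ring.
  by rewrite mul1r lexx invr_ge0 ltW.
Qed.

Variable V : ultrafilter nat.
Hypothesis V_cofinite : forall n0, V (fun n => (n0 <= n)%N).

Definition integral (f : Q -> R) : R := ulim V (fun n => riemann_sum n.+1 f).

Lemma V_inv_small (e : R) : 0 < e -> V (fun n => n.+1%:R^-1 < e).
Proof.
move=> e0; apply: ufS (V_cofinite (Num.truncn e^-1)) => n hn.
rewrite invf_plt ?posrE ?ltr0n //.
have e_inv0 : 0 <= e^-1 by rewrite invr_ge0 ltW.
have /andP[_ h] := truncn_itv e_inv0.
by apply: lt_le_trans h _; rewrite ler_nat.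
Qed.

Lemma integral_bounds f lo hi : (forall q, 0 <= f q <= 1) -> (forall q, lo <= f q <= hi) ->
  lo <= integral f <= hi.
Proof.
move=> f01 fb; apply/andP; split.
  apply: (ulim_lb (fun n => riemann_sum_range n f01)) => e e0.
  apply: ufS (V_inv_small e0) => n hn.
  have /andP[h _] := riemann_sum_bounds (ltn0Sn n) f01 fb.
  by move: hn h; set x := _^-1; lra.
have hb n : -1 <= riemann_sum n.+1 f <= hi.
  have /andP[_ h1] := riemann_sum_bounds (ltn0Sn n) f01 fb.
  by have /andP[h2 _] := riemann_sum_range n f01; apply/andP.
by case/andP: (ulim_bounds V hb).
Qed.

Lemma integral_transl f (t : Q) : integral (fun q => f (t⁻¹ ⋅ q)) = integral f.
Proof.
by rewrite /integral; congr ulim; apply: functional_extensionality => n; rewrite riemann_sum_transl.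
Qed.

Lemma integralD f g : (forall q, 0 <= f q) -> (forall q, 0 <= g q) ->
  (forall q, f q + g q <= 1) -> integral (fun q => f q + g q) = integral f + integral g.
Proof.
move=> f0 g0 fg1.
have f01 q : 0 <= f q <= 1 by have := g0 q; have := fg1 q; have := f0 q; move=> *; apply/andP; lra.
have g01 q : 0 <= g q <= 1 by have := g0 q; have := fg1 q; have := f0 q; move=> *; apply/andP; lra.
rewrite /integral -(ulimD V (fun n => riemann_sum_range n f01) (fun n => riemann_sum_range n g01)).
apply: ulim_eq => e e0.
have e20 : 0 < e / 2 by apply: divr_gt0.
have sum_range n : -2 <= riemann_sum n.+1 f + riemann_sum n.+1 g <= 2.
  have /andP[? ?] := riemann_sum_range n f01; have /andP[? ?] := riemann_sum_range n g01.
  by apply/andP; lra.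
apply: ufS (ufI (ulim_spec V sum_range e20) (V_inv_small e20)) => n [near small].
have /andP[h3 h4] := riemann_sumD (ltn0Sn n) f0 g0 fg1.
move: near; rewrite ltr_norml => /andP[h5 h6].
move: small h3 h4 h5 h6; set x := _^-1; set L := ulim V _.
set a := riemann_sum _ (fun q => _); set b := riemann_sum _ f; set c := riemann_sum _ g.
by move=> *; rewrite ltr_norml; apply/andP; lra.
Qed.
End Integral.

Section MorphKernel.
Variables (G : Defs.group) (N : G -> Prop) (gT : finGroupType).
Hypothesis nN : is_normal G N.
Implicit Types psi : G -> gT.

Lemma morph_on1 psi : morph_on N psi -> psi 𝟙 = 1%g.
Proof.
move=> h; apply: (@mulgI _ (psi 𝟙)).
by rewrite mulg1 -h ?gmul1l //; apply: normal1 nN.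
Qed.

Lemma morph_onV psi x : morph_on N psi -> N x -> psi x⁻¹ = (psi x)^-1%g.
Proof.
move=> h Nx; have NVx := normalV nN Nx; apply: (@mulIg _ (psi x)).
by rewrite mulVg -h ?gmulVl ?(morph_on1 h).
Qed.

Definition morph_kernel (x : G) :=
  N x /\ forall psi : G -> gT, morph_on N psi -> psi x = 1%g.

Lemma morph_kernel_normal : is_normal G morph_kernel.
Proof.
split; [split; [|split]|].
- by split=> [|psi /morph_on1 //]; apply: (normal1 nN).
- move=> x y [Nx kx] [Ny ky]; split; first exact: (normalM nN).
  by move=> psi h; rewrite h // kx // ky // mulg1.
- move=> x [Nx kx]; split; first exact: (normalV nN).
  by move=> psi h; rewrite morph_onV // kx // invg1.
- move=> g n [Nn kn]; split; first exact: (normalJ nN).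
  move=> psi h; apply: (kn (fun y => psi (g ⋅ y ⋅ g⁻¹))) => x y Nx Ny.
  by rewrite -h; [congr psi; rewrite -!gmulA gmulKl|exact: (normalJ nN)..].
Qed.
End MorphKernel.

(* The elements of N whose image under every morphism N -> gT is determined by
   the images of a finite list i are coded by the map "images of i |-> image of
   n", a point of a finite type; codes agree exactly modulo the kernel K of all
   such morphisms.  Counting codes thus gives uniform measures on the finite
   subgroups of N / K, which exhaust it as i grows. *)
Section LocalDensity.
Variables (G : Defs.group) (N : G -> Prop) (gT : finGroupType).
Hypothesis nN : is_normal G N.
Local Notation K := (morph_kernel N gT).
Local Notation H := (quotient_group (morph_kernel_normal gT nN)).
Local Notation qm := (quotient_map (morph_kernel_normal gT nN)).
Implicit Types (i : list G) (psi : G -> gT).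

Definition determined_by i (n : G) := N n /\ forall psi psi', morph_on N psi ->
  morph_on N psi' -> (forall x, List.In x i -> psi x = psi' x) -> psi n = psi' n.

Lemma determined_by1 i : determined_by i 𝟙.
Proof. by split=> [|psi psi' h h' _]; rewrite ?(morph_on1 nN) //; apply: normal1 nN. Qed.

Lemma determined_byM i x y : determined_by i x -> determined_by i y -> determined_by i (x ⋅ y).
Proof.
move=> [Nx dx] [Ny dy]; split=> [|psi psi' h h' e]; first exact: (normalM nN).
by rewrite h // h' // (dx _ _ h h' e) (dy _ _ h h' e).
Qed.

Lemma determined_byV i x : determined_by i x -> determined_by i x⁻¹.
Proof.
move=> [Nx dx]; split=> [|psi psi' h h' e]; first exact: (normalV nN).
by rewrite !(morph_onV nN) // (dx _ _ h h' e).
Qed.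

Lemma determined_by_mem i l : N l -> List.In l i -> determined_by i l.
Proof. by move=> Nl li; split=> // psi psi' _ _; apply. Qed.

Lemma In_nth_ord i x : List.In x i -> exists j : 'I_(size i), nth 𝟙 i j = x.
Proof.
elim: i => [|a i IH] //= [->|/IH [j <-]]; first by exists ord0.
by exists (lift ord0 j).
Qed.

Definition images i psi : {ffun 'I_(size i) -> gT} := [ffun j : 'I_(size i) => psi (nth 𝟙 i j)].

Definition code i (n : G) : {ffun {ffun 'I_(size i) -> gT} -> gT} :=
  [ffun t => if pselect (exists psi, morph_on N psi /\ images i psi = t) is left h
             then proj1_sig (cid h) n else 1%g].

Lemma codeE i n psi : morph_on N psi -> determined_by i n -> code i n (images i psi) = psi n.
Proof.
move=> h [Nn dn]; rewrite /code ffunE.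
case: pselect => [e|[]]; last by exists psi.
case: cid => psi' [h' e'] /=; apply: dn => // x /In_nth_ord [j <-].
by move/ffunP: e' => /(_ j); rewrite !ffunE.
Qed.

Lemma code_eq i n n' : determined_by i n -> determined_by i n' ->
  code i n = code i n' <-> K (n⁻¹ ⋅ n').
Proof.
move=> dn dn'; have [Nn _] := dn; have [Nn' _] := dn'.
have NVn := normalV nN Nn; have Nnn' := normalM nN NVn Nn'.
split=> [e|[_ kn]].
  split=> // psi h; rewrite h // (morph_onV nN) //.
  by rewrite -(codeE h dn) -(codeE h dn') e mulVg.
apply/ffunP => t; rewrite !ffunE; case: pselect => // e; case: cid => psi [h _] /=.
have /eqP := kn psi h; rewrite h // (morph_onV nN) //.
by rewrite mulg_eq1 => /eqP /invg_inj.
Qed.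

Lemma code_quotient i x n n' : determined_by i n -> determined_by i n' ->
  code i n = code i n' -> qm (x ⋅ n) = qm (x ⋅ n').
Proof.
move=> dn dn' /(code_eq dn dn') kn; apply/quotient_map_eq.
by rewrite ginvM -gmulA gmulKl.
Qed.

Definition code_set i (A : H -> Prop) (x : G) : {set {ffun {ffun 'I_(size i) -> gT} -> gT}} :=
  [set c | `[< exists n, [/\ determined_by i n, code i n = c & A (qm (x ⋅ n))] >]].

Lemma code_setP i A x c :
  reflect (exists n, [/\ determined_by i n, code i n = c & A (qm (x ⋅ n))]) (c \in code_set i A x).
Proof. by rewrite inE; apply: asboolP. Qed.

Lemma code_setU i A B x : (forall z, A z -> B z -> False) ->
  #|code_set i (fun z => A z \/ B z) x| = (#|code_set i A x| + #|code_set i B x|)%N.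
Proof.
move=> dAB.
have -> : code_set i (fun z => A z \/ B z) x = code_set i A x :|: code_set i B x.
  apply/setP => c; rewrite in_setU; apply/code_setP/orP.
    by move=> [n [dn <- [Ax|Bx]]]; [left|right]; apply/code_setP; exists n.
  by case=> /code_setP [n [dn <- ?]]; exists n; split; auto.
rewrite cardsU (_ : _ :&: _ = set0) ?cards0 ?subn0 //.
apply/setP => c; rewrite inE in_set0.
apply/andP => -[/code_setP [n [dn <- An]] /code_setP [n' [dn' e Bn']]].
by apply: (dAB _ An); rewrite (code_quotient x dn dn').
Qed.

Lemma code_setT_gt0 i x : (0 < #|code_set i (fun _ => True) x|)%N.
Proof.
apply/card_gt0P; exists (code i 𝟙); apply/code_setP.
by exists 𝟙; split=> //; apply: determined_by1.
Qed.

Definition code_repr i (c : {ffun {ffun 'I_(size i) -> gT} -> gT}) : G :=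
  if pselect (exists n, determined_by i n /\ code i n = c) is left h then proj1_sig (cid h)
  else 𝟙.

Lemma code_reprP i n : determined_by i n ->
  determined_by i (code_repr (code i n)) /\ code i (code_repr (code i n)) = code i n.
Proof.
move=> dn; rewrite /code_repr; case: pselect => [h|[]]; last by exists n.
by case: cid.
Qed.

Lemma card_code_set_mulr i A x l : determined_by i l ->
  (#|code_set i A (x ⋅ l)| <= #|code_set i A x|)%N.
Proof.
move=> dl; pose shift c := code i (l ⋅ @code_repr i c).
have sub : shift @: code_set i A (x ⋅ l) \subset code_set i A x.
  apply/subsetP => _ /imsetP [_ /code_setP [n [dn <- An]] ->].
  have [dr er] := code_reprP dn.
  apply/code_setP; exists (l ⋅ code_repr (code i n)); split; first exact: determined_byM.
    by [].
  by rewrite gmulA (code_quotient (x ⋅ l) dr dn).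
have inj : {in code_set i A (x ⋅ l) &, injective shift}.
  move=> _ _ /code_setP [n [dn <- _]] /code_setP [n' [dn' <- _]] e.
  have [dr er] := code_reprP dn; have [dr' er'] := code_reprP dn'.
  have := (code_eq (determined_byM dl dr) (determined_byM dl dr')).1 e.
  rewrite ginvM -gmulA gmulKl -(code_eq dr dr').
  by rewrite er er'.
by rewrite -(card_in_imset inj); apply: subset_leq_card.
Qed.

Lemma card_code_set_mulr_eq i A x l : determined_by i l ->
  #|code_set i A (x ⋅ l)| = #|code_set i A x|.
Proof.
move=> dl; apply/eqP; rewrite eqn_leq card_code_set_mulr //=.
by have := card_code_set_mulr A (x ⋅ l) (determined_byV dl); rewrite gmulKr.
Qed.

Definition local_density i (A : H -> Prop) (x : G) : R :=
  (#|code_set i A x|%:R / #|code_set i (fun _ => True) x|%:R)%R.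

Lemma local_density_bounds i A x : (0 <= local_density i A x <= 1)%R.
Proof.
rewrite /local_density divr_ge0 ?ler_pdivrMr ?ltr0n ?code_setT_gt0 //= mul1r ler_nat.
apply: subset_leq_card; apply/subsetP => c /code_setP [n [dn e _]].
by apply/code_setP; exists n.
Qed.

Lemma local_densityU i A B x : (forall z, A z -> B z -> False) ->
  local_density i (fun z => A z \/ B z) x = (local_density i A x + local_density i B x)%R.
Proof. by move=> h; rewrite /local_density code_setU // natrD mulrDl. Qed.

Lemma local_densityT i x : local_density i (fun _ => True) x = 1%R.
Proof. by rewrite /local_density divff // pnatr_eq0 -lt0n code_setT_gt0. Qed.

Lemma local_density_mulr i A x l : determined_by i l ->
  local_density i A (x ⋅ l) = local_density i A x.
Proof. by move=> dl; rewrite /local_density !card_code_set_mulr_eq. Qed.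

Lemma local_density_transl i A g x :
  local_density i (fun z => A ((qm g)⁻¹ ⋅ z)) x = local_density i A (g⁻¹ ⋅ x).
Proof.
rewrite /local_density; congr (_%:R / _%:R)%R; apply: eq_card => c.
apply/code_setP/code_setP => -[n [dn e An]]; exists n; split => //.
  by move: An; rewrite -(homV (quotient_map_hom _)) -quotient_map_hom gmulA.
by rewrite -(homV (quotient_map_hom _)) -quotient_map_hom gmulA.
Qed.
End LocalDensity.

(* The mean of A on G / K integrates over Q = G / N the (ultralimit of the)
   local densities of A in the fibres, which are copies of the locally finite
   group N / K. *)
Section ExtensionMean.
Local Open Scope ring_scope.
Variables (G : Defs.group) (N : G -> Prop) (gT : finGroupType).
Hypothesis nN : is_normal G N.
Local Notation H := (quotient_group (morph_kernel_normal gT nN)).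
Local Notation qm := (quotient_map (morph_kernel_normal gT nN)).

Variables (Q : Defs.group) (pi : G -> Q).
Hypotheses (pi_hom : is_hom G Q pi) (pi_surj : surjective pi).
Hypothesis pi_ker : forall x, pi x = 𝟙 <-> N x.
Variable m : (Q -> Prop) -> R.
Hypothesis hm : invariant_mean m.
Variable U : ultrafilter (list G).
Hypothesis U_cofinal : forall l, U (fun i => List.In l i).
Variable V : ultrafilter nat.
Hypothesis V_cofinite : forall n0, V (fun n => (n0 <= n)%N).

Definition pi_repr (q : Q) : G := proj1_sig (cid (pi_surj q)).

Lemma pi_reprK q : pi (pi_repr q) = q.
Proof. by rewrite /pi_repr; case: cid. Qed.

Definition fiber_density (A : H -> Prop) (q : Q) : R :=
  ulim U (fun i => local_density i A (pi_repr q)).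

Lemma fiber_density_bounds A q : 0 <= fiber_density A q <= 1.
Proof. by apply: (ulim_bounds U) => i; apply: local_density_bounds. Qed.

Lemma fiber_densityU A B q : (forall z, A z -> B z -> False) ->
  fiber_density (fun z => A z \/ B z) q = fiber_density A q + fiber_density B q.
Proof.
move=> dAB; rewrite /fiber_density -(ulimD U (fun i => local_density_bounds i _ _)
  (fun i => local_density_bounds i _ _)).
by congr ulim; apply: functional_extensionality => i; rewrite local_densityU.
Qed.

Lemma fiber_densityT q : fiber_density (fun _ => True) q = 1.
Proof.
by apply: ulim_eq => e e0; apply: ufS (ufT U) => i _; rewrite local_densityT subrr normr0.
Qed.

Lemma fiber_densityE A x : fiber_density A (pi x) = ulim U (fun i => local_density i A x).
Proof.
rewrite /fiber_density (ulim_congr (fun i => local_density_bounds i _ _)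
  (_ : U (fun i => _ = local_density i A x))) //.
set l := (pi_repr (pi x))⁻¹ ⋅ x.
have Nl : N l by apply/pi_ker; rewrite pi_hom (homV pi_hom) pi_reprK gmulVl.
apply: ufS (U_cofinal l) => i li.
by rewrite -[in RHS](gmulKVl (pi_repr (pi x)) x) local_density_mulr //; apply: determined_by_mem.
Qed.

Lemma fiber_density_transl A g q :
  fiber_density (fun z => A ((qm g)⁻¹ ⋅ z)) q = fiber_density A ((pi g)⁻¹ ⋅ q).
Proof.
rewrite -(pi_reprK q) -(homV pi_hom) -pi_hom !fiber_densityE.
by congr ulim; apply: functional_extensionality => i; rewrite local_density_transl.
Qed.

Definition extension_mean (A : H -> Prop) : R := integral m V (fiber_density A).

Lemma extension_mean_invariant : invariant_mean extension_mean.
Proof.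
have hb := fiber_density_bounds.
split.
- by move=> A; case/andP: (integral_bounds hm V_cofinite (hb A) (hb A)).
- apply/eqP; rewrite eq_le andbC; apply: (integral_bounds hm V_cofinite (hb _)) => q.
  by rewrite fiber_densityT lexx.
- move=> A B dAB; rewrite /extension_mean -integralD //.
  + by congr integral; apply: functional_extensionality => q; rewrite fiber_densityU.
  + by move=> q; case/andP: (hb A q).
  + by move=> q; case/andP: (hb B q).
  + by move=> q; rewrite -fiber_densityU //; case/andP: (hb (fun x => A x \/ B x) q).
- move=> h A; have [g <-] := quotient_map_surj h; rewrite /extension_mean.
  rewrite -[in RHS](integral_transl hm V _ (pi g)).
  by congr integral; apply: functional_extensionality => q; rewrite fiber_density_transl.
Qed.
End ExtensionMean.

Lemma ultrafilter_lists_cofinal (T : Type) :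
  exists U : ultrafilter (list T), forall l, U (fun i => List.In l i).
Proof.
have [U hU] := @ultrafilter_cofinal (list T) (fun a b => forall x, List.In x a -> List.In x b)
  [::] (fun a b c hab hbc x ha => hbc x (hab x ha))
  (fun a b => ex_intro _ (a ++ b) (conj (fun x h => List.in_or_app _ _ _ (or_introl h))
                                         (fun x h => List.in_or_app _ _ _ (or_intror h)))).
by exists U => l; apply: ufS (hU [:: l]) => i; apply; left.
Qed.

Lemma ultrafilter_nat_cofinite : exists V : ultrafilter nat, forall n0, V (fun n => (n0 <= n)%N).
Proof.
apply: (@ultrafilter_cofinal nat leq 0%N (fun a b c => @leq_trans b a c)) => a b.
by exists (maxn a b); rewrite leq_maxl leq_maxr.
Qed.

Lemma amenable_morph_kernel_quotient (G : Defs.group) (N : G -> Prop) (nN : is_normal G N)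
  (gT : finGroupType) : amenable_quotient G N -> amenable (quotient_group (morph_kernel_normal gT nN)).
Proof.
move=> [Q [pi [pi_hom [pi_surj [pi_ker /amenableP [m hm]]]]]].
have [U U_cofinal] := ultrafilter_lists_cofinal G.
have [V V_cofinite] := ultrafilter_nat_cofinite.
apply/amenableP; exists (extension_mean pi_surj m U V).
exact: extension_mean_invariant.
Qed.

Lemma free_subgroup_perm_separated (G : Defs.group) (N : G -> Prop) (g : G) :
  free_subgroup G N -> N g -> g <> 𝟙 ->
  exists k (psi : G -> {perm 'I_k}), morph_on N psi /\ psi g <> 1%g.
Proof.
move=> [_ [S [_ [S_gen S_free]]]] Ng g_ne1.
have [w [w_over w_val]] := S_gen g Ng; subst g.
have [r [r_red r_sub r_val _]] := reduce_word (fun _ : G => 1%g : {perm 'I_1}) w.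
have r_over : word_over S r.
  by apply/word_overP => l /r_sub; move/word_overP: w_over; apply.
have r_ne : r <> [::] by move=> r_nil; apply: g_ne1; rewrite -r_val r_nil.
exists (size r).+1, (free_lift (letter_perm r_red) S); split.
  exact: free_lift_morph.
by rewrite -r_val free_lift_word //; apply: word_eval_letter_perm_ne1.
Qed.

Lemma morph_kernel_quotient_ne1 (G : Defs.group) (N : G -> Prop) (nN : is_normal G N)
  (gT : finGroupType) (psi : G -> gT) (g : G) :
  morph_on N psi -> psi g <> 1%g -> quotient_map (morph_kernel_normal gT nN) g <> 𝟙.
Proof. by move=> h psi_g /quotient_map_eq1 [_ /(_ psi h)]. Qed.

Import Pilot.Defs.

Theorem corollary3p4 (G : group) (N : G -> Prop) :
  is_normal G N -> free_subgroup G N -> amenable_quotient G N ->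
  residually_amenable G.
Proof.
move=> nN N_free G_N_amenable g g_ne1.
have [Ng|Ng] := pselect (N g); last first.
  have [Q [pi [pi_hom [pi_surj [pi_ker Q_amenable]]]]] := G_N_amenable.
  by exists Q, pi; split; [|split; [|split]] => // /pi_ker.
have [k [psi [psi_morph psi_g]]] := free_subgroup_perm_separated N_free Ng g_ne1.
exists (quotient_group (morph_kernel_normal {perm 'I_k} nN)), (quotient_map _).
split; first exact: quotient_map_hom.
split; first exact: quotient_map_surj.
split; first exact: amenable_morph_kernel_quotient.
exact: morph_kernel_quotient_ne1 psi_morph psi_g.
Qed.
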